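(* Let $S$ be a solid and let $x,y\in S^*$. If $R(x)\le R(y)$, then $e(x)y\le e(y)x$.
   Context: A solid is a set $S$ with two binary operations $+$ and $\cdot$ (written $xy$) and a binary relation $\le$ satisfying the following axioms (all variables range over $S$). (A1) $+$ is associative and commutative. (A2) For each $x$ there is $e$ with $x+e=x$ such that $e+f=e$ for every $f$ with $x+f=x$; this $e$ is unique and is denoted $e(x)$ (the magnitude of $x$). An element $x$ with $x=e(x)$ is called a magnitude. (A3) For each $x$ there is $s$ with $x+s=e(x)$ and $e(s)=e(x)$; it is unique and denoted $-x$; write $x-y$ for $x+(-y)$. (A4) $e(x+y)=e(x)$ or $e(x+y)=e(y)$. (M1) $\cdot$ is associative and commutative. (M2) For each $x\neq e(x)$ there is $u$ with $xu=x$ such that $uv=u$ for every $v$ with $xv=x$; it is unique and denoted $u(x)$. (M3) For each $x\ne e(x)$ there is $d$ with $xd=u(x)$ and $u(d)=u(x)$; it is unique and denoted $x^{-1}$; write $y/x$ for $yx^{-1}$. (M4) If $x\neq e(x)$ and $y\ne e(y)$ then $u(xy)=u(x)$ or $u(xy)=u(y)$. (O1) $\le$ is a total order (reflexive, antisymmetric, transitive, total); $x<y$ means $x\le y$ and $x\ne y$. (O2) $x\le y\Rightarrow x+z\le y+z$. (O3) $y+e(x)=e(x)\Rightarrow (y\le e(x)$ and $-y\le e(x))$. (O4) $(e(x)<x$ and $y\le z)\Rightarrow xy\le xz$. (O5) $e(y)\le y\le z\Rightarrow e(x)y\le e(x)z$. (AM1) For all $x,y$ there is $z$ with $e(x)y=e(z)$.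 (AM2) $e(xy)=e(x)y+e(y)x$. (AM3) If $x\ne e(x)$ then $e(u(x))=e(x)/x$. (AM4) (distributivity axiom) $xy+xz=x(y+z)+e(x)y+e(x)z$. (AM5) $-(xy)=(-x)y$. (E1) There is $m$ with $m+x=x$ for all $x$; it is unique, called zero and denoted $0$. (E2) There is $u$ with $ux=x$ for all $x$; it is unique, called one and denoted $1$. (E3) There is $M$ with $e(x)+M=M$ for all $x$. (E4) There is $x$ with $e(x)\ne 0$ and $e(x)\ne M$. (E5) For every $x$ there is $a$ with $x=a+e(x)$ and $e(a)=0$. (E6) If $x,y$ are magnitudes with $x<y$, there is $z$ with $z\ne e(z)$ and $x<z<y$. Further notation: $S^*=\{x\in S: x\ne e(x)\}$ (zeroless elements). $x$ is positive if $e(x)\le x$ and negative if $x<e(x)$; $|x|=x$ if $x$ is positive and $|x|=-x$ if $x$ is negative. $x$ is precise if $e(x)=0$. The relative uncertainty $R(x)$ is $e(u(x))$ if $x\ne e(x)$, and $M$ (from (E3)) if $x=e(x)$. *)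

From Stdlib Require Import ClassicalEpsilon.
Set Implicit Arguments.

(* The operations e, -, u, ^-1 and the constants 0, 1, M, whose existence
   (and, where stated, uniqueness) is postulated by the axioms, are recorded
   as fields together with their characterizing properties. *)
Record Solid := {
  carrier :> Type;
  add : carrier -> carrier -> carrier;
  mul : carrier -> carrier -> carrier;
  le  : carrier -> carrier -> Prop;
  e   : carrier -> carrier;
  opp : carrier -> carrier;
  u   : carrier -> carrier;      (* u(x), (M2), meaningful for x <> e x *)
  inv : carrier -> carrier;      (* x^-1, (M3), meaningful for x <> e x *)
  zero : carrier;
  one  : carrier;
  Mtop : carrier;
  addA : forall x y z, add x (add y z) = add (add x y) z;
  addC : forall x y, add x y = add y x;
  e_neutral : forall x, add x (e x) = x;
  e_min : forall x f, add x f = x -> add (e x) f = e x;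
  e_unique : forall x d, add x d = x ->
      (forall f, add x f = x -> add d f = d) -> d = e x;
  opp_spec : forall x, add x (opp x) = e x /\ e (opp x) = e x;
  opp_unique : forall x s, add x s = e x -> e s = e x -> s = opp x;
  e_add : forall x y, e (add x y) = e x \/ e (add x y) = e y;
  mulA : forall x y z, mul x (mul y z) = mul (mul x y) z;
  mulC : forall x y, mul x y = mul y x;
  u_neutral : forall x, x <> e x -> mul x (u x) = x;
  u_min : forall x v, x <> e x -> mul x v = x -> mul (u x) v = u x;
  u_unique : forall x d, x <> e x -> mul x d = x ->
      (forall v, mul x v = x -> mul d v = d) -> d = u x;
  inv_spec : forall x, x <> e x -> mul x (inv x) = u x /\ u (inv x) = u x;
  inv_unique : forall x d, x <> e x -> mul x d = u x -> u d = u x -> d = inv x;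
  u_mul : forall x y, x <> e x -> y <> e y ->
      u (mul x y) = u x \/ u (mul x y) = u y;
  le_refl : forall x, le x x;
  le_antisym : forall x y, le x y -> le y x -> x = y;
  le_trans : forall x y z, le x y -> le y z -> le x z;
  le_total : forall x y, le x y \/ le y x;
  le_add : forall x y z, le x y -> le (add x z) (add y z);
  le_e : forall x y, add y (e x) = e x -> le y (e x) /\ le (opp y) (e x);
  le_mul : forall x y z, (le (e x) x /\ e x <> x) -> le y z -> le (mul x y) (mul x z);
  le_mul_e : forall x y z, le (e y) y -> le y z -> le (mul (e x) y) (mul (e x) z);
  am1 : forall x y, exists z, mul (e x) y = e z;
  am2 : forall x y, e (mul x y) = add (mul (e x) y) (mul (e y) x);
  am3 : forall x, x <> e x -> e (u x) = mul (e x) (inv x);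
  am4 : forall x y z, add (mul x y) (mul x z)
                      = add (add (mul x (add y z)) (mul (e x) y)) (mul (e x) z);
  am5 : forall x y, opp (mul x y) = mul (opp x) y;
  zero_spec : forall x, add zero x = x;
  one_spec : forall x, mul one x = x;
  Mtop_spec : forall x, add (e x) Mtop = Mtop;
  e4 : exists x, e x <> zero /\ e x <> Mtop;
  e5 : forall x, exists a, x = add a (e x) /\ e a = zero;
  e6 : forall x y, x = e x -> y = e y -> (le x y /\ x <> y) ->
      exists z, z <> e z /\ (le x z /\ x <> z) /\ (le z y /\ z <> y)
}.

Arguments add {s0} _ _.
Arguments mul {s0} _ _.
Arguments le {s0} _ _.
Arguments e {s0} _.
Arguments opp {s0} _.
Arguments u {s0} _.
Arguments inv {s0} _.

Definition lt (S : Solid) (x y : S) : Prop := le x y /\ x <> y.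

Definition zeroless (S : Solid) (x : S) : Prop := x <> e x.

Definition relunc (S : Solid) (x : S) : S :=
  if excluded_middle_informative (x = e x) then Mtop S else e (u x).

Arguments lt {S} _ _.
Arguments zeroless {S} _.
Arguments relunc {S} _.

(* Since u(x) is the unit of x, AM2 and AM3 give x R(x) = e(x) for zeroless x.
   Multiplying R(x) <= R(y) first by x and then by y gives
   e(x) <= x R(y) and then y e(x) <= x y R(y) = x e(y).  Multiplication by a
   zeroless element is monotone on magnitudes whatever its sign: the negative
   case follows from the positive one because -w = w for a magnitude w (AM5),
   and all the products involved are magnitudes by AM1. *)
From Stdlib Require Import ClassicalEpsilon.
Set Implicit Arguments.

Arguments addC {s0}.
Arguments e_neutral {s0}.
Arguments e_min {s0}.
Arguments e_unique {s0}.
Arguments opp_spec {s0}.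
Arguments opp_unique {s0}.
Arguments mulA {s0}.
Arguments mulC {s0}.
Arguments u_neutral {s0}.
Arguments inv_spec {s0}.
Arguments le_total {s0}.
Arguments le_add {s0}.
Arguments le_mul {s0}.
Arguments am1 {s0}.
Arguments am2 {s0}.
Arguments am3 {s0}.
Arguments am5 {s0}.

Section Solid_theory.
Variable S : Solid.
Implicit Types w x y z : S.

Definition magnitude w := w = e w.

Lemma e_idem z : e (e z) = e z.
Proof.
  symmetry. apply e_unique.
  - apply e_min, e_neutral.
  - intros f Hf. exact Hf.
Qed.

Lemma magnitude_e z : magnitude (e z).
Proof. unfold magnitude. now rewrite e_idem. Qed.

Lemma add_magnitude_self w : magnitude w -> add w w = w.
Proof. intros Hw. pose proof (e_neutral w) as H. now rewrite <- Hw in H. Qed.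

Lemma opp_magnitude w : magnitude w -> opp w = w.
Proof.
  intros Hw. symmetry. apply opp_unique; [|reflexivity].
  rewrite <- Hw. now apply add_magnitude_self.
Qed.

Lemma mul_magnitude x w : magnitude w -> magnitude (mul x w).
Proof.
  intros Hw. unfold magnitude. rewrite (mulC x w), Hw.
  destruct (am1 w x) as [t ->]. apply magnitude_e.
Qed.

Lemma mul_opp_magnitude x w : magnitude (mul x w) -> mul (opp x) w = mul x w.
Proof. intros Hm. rewrite <- am5. now apply opp_magnitude. Qed.

Lemma relunc_zeroless x : zeroless x -> relunc x = e (u x).
Proof.
  unfold relunc. intros Hx.
  destruct (excluded_middle_informative (x = e x)); [contradiction | reflexivity].
Qed.

Lemma mul_e_u x : zeroless x -> mul x (e (u x)) = e x.
Proof.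
  intros Hx.
  assert (Hexu : mul (e x) (u x) = mul x (e (u x))).
  { rewrite am3 by exact Hx.
    rewrite mulA, (mulC x (e x)), <- mulA.
    f_equal. symmetry. apply inv_spec, Hx. }
  pose proof (am2 x (u x)) as Hsum.
  rewrite u_neutral in Hsum by exact Hx.
  rewrite Hexu, (mulC (e (u x)) x), add_magnitude_self in Hsum
    by apply mul_magnitude, magnitude_e.
  now symmetry.
Qed.

Lemma opp_pos x : zeroless x -> le x (e x) -> lt (e (opp x)) (opp x).
Proof.
  intros Hx Hle. destruct (opp_spec x) as [Hxx Hex]. rewrite Hex.
  assert (Hshift : add (e x) (opp x) = opp x).
  { rewrite addC, <- Hex. apply e_neutral. }
  split.
  - pose proof (le_add _ _ (opp x) Hle) as H. now rewrite Hxx, Hshift in H.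
  - intros Heq. apply Hx.
    rewrite <- Hxx, <- Heq. symmetry. apply e_neutral.
Qed.

Lemma zeroless_sign x : zeroless x ->
  exists p, (p = x \/ p = opp x) /\ lt (e p) p.
Proof.
  intros Hx. destruct (le_total (e x) x) as [Hle | Hle].
  - exists x. split; [now left | split; auto].
  - exists (opp x). split; [now right | now apply opp_pos].
Qed.

Lemma le_mul_magnitude x y z : zeroless x -> magnitude y -> magnitude z ->
  le y z -> le (mul x y) (mul x z).
Proof.
  intros Hx Hy Hz Hyz.
  destruct (zeroless_sign Hx) as [p [Hp Hpos]].
  pose proof (le_mul _ _ _ Hpos Hyz) as H.
  destruct Hp as [-> | ->]; [exact H|].
  now rewrite !mul_opp_magnitude in H by now apply mul_magnitude.
Qed.

End Solid_theory.

Theorem mainTheorem9 (S : Solid) (x y : S) :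
  zeroless x -> zeroless y -> le (relunc x) (relunc y) ->
  le (mul (e x) y) (mul (e y) x).
Proof.
  intros Hx Hy H.
  rewrite !relunc_zeroless in H by assumption.
  assert (Hex : le (e x) (mul x (e (u y)))).
  { rewrite <- (mul_e_u Hx).
    apply le_mul_magnitude; try apply magnitude_e; assumption. }
  assert (Hexy : le (mul y (e x)) (mul y (mul x (e (u y))))).
  { apply le_mul_magnitude; auto using magnitude_e, mul_magnitude. }
  rewrite mulA, (mulC y x), <- mulA, (mul_e_u Hy) in Hexy.
  now rewrite mulC, (mulC (e y)).
Qed.
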